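(* Let $I\ge 1$ and positive integers $J_1,\dots,J_I$ be given, and set $J_0=J_{I+1}=1$. Let real weights $W_{\hat j,i,j}$ (for $i=1,\dots,I+1$, $j=1,\dots,J_i$, $\hat j=1,\dots,J_{i-1}$) and real biases $B_{i,j}$ (for $i=1,\dots,I+1$, $j=1,\dots,J_i$) be given, and assume $W_{\hat j,i,j}\ge 0$ for all indices. Let $N:\mathbb{R}\to\mathbb{R}$ be the function computed by the ReLU network with these parameters, defined in the context below. Fix $x\in\mathbb{R}$ and consider the linear program in the variables $\sigma_{i,j}$ ($i=1,\dots,I$, $j=1,\dots,J_i$) and $\theta\in\mathbb{R}$: $$\min\ \theta$$ subject to $$\sigma_{i,j}\ge 0 \quad \forall i,j,$$ $$\sigma_{1,j}\ge W_{1,1,j}\,x+B_{1,j}\quad \forall j=1,\dots,J_1,$$ $$\sigma_{i,j}\ge \sum_{\hat j=1}^{J_{i-1}} W_{\hat j,i,j}\,\sigma_{i-1,\hat j}+B_{i,j}\quad \forall i=2,\dots,I,\ j=1,\dots,J_i,$$ $$\theta=\sum_{\hat j=1}^{J_I} W_{\hat j,I+1,1}\,\sigma_{I,\hat j}+B_{I+1,1}.$$ Then this linear program is feasible and bounded below, and its optimal value equals $N(x)$. Moreover, setting each $\sigma_{i,j}$ equal to the ReLU activation $a_{i,j}(x)$ gives an optimal solution, and every feasible solution satisfies $\sigma_{i,j}\ge a_{i,j}(x)$ for all $i,j$.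
   Context: The network function $N$ is defined as follows. For input $x\in\mathbb{R}$, set $a_{1,j}(x)=\max\bigl(0,\,W_{1,1,j}x+B_{1,j}\bigr)$ for $j=1,\dots,J_1$; for $i=2,\dots,I$ and $j=1,\dots,J_i$, set $a_{i,j}(x)=\max\bigl(0,\,\sum_{\hat j=1}^{J_{i-1}}W_{\hat j,i,j}\,a_{i-1,\hat j}(x)+B_{i,j}\bigr)$; finally $N(x)=\sum_{\hat j=1}^{J_I}W_{\hat j,I+1,1}\,a_{I,\hat j}(x)+B_{I+1,1}$ (no activation is applied at the output node). Here $W_{\hat j,i,j}$ is the weight of the connection from node $\hat j$ in layer $i-1$ to node $j$ in layer $i$ (layer $0$ being the single input and layer $I+1$ the single output), and $B_{i,j}$ is the bias of node $j$ in layer $i$. *)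

From mathcomp Require Import all_boot all_order all_algebra.
Set Implicit Arguments. Unset Strict Implicit. Unset Printing Implicit Defensive.
Import Order.TTheory GRing.Theory Num.Theory.
Local Open Scope ring_scope.

(* Conventions: all indices are 1-based natural numbers as in the paper.
   Layer widths: J : nat -> nat gives J_1..J_I; Jw I J extends it with
   J_0 = J_{I+1} = 1.
   W hj i j = W_{hat j, i, j};  B i j = B_{i,j}. *)

Definition Jw (I : nat) (J : nat -> nat) (i : nat) : nat :=
  if i == 0%N then 1%N else if i == I.+1 then 1%N else J i.

Section Net.
Variable R : realFieldType.
Variables (I : nat) (J : nat -> nat) (W : nat -> nat -> nat -> R)
          (B : nat -> nat -> R).

Definition relu (t : R) : R := Num.max 0 t.

Fixpoint act (i : nat) (x : R) (j : nat) : R :=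
  match i with
  | 0%N => 0
  | 1%N => relu (W 1 1 j * x + B 1 j)
  | (i'.+1) as i => relu (\sum_(1 <= hj < (J i').+1) W hj i j * act i' x hj + B i j)
  end.

Definition net (x : R) : R :=
  \sum_(1 <= hj < (J I).+1) W hj I.+1 1 * act I x hj + B I.+1 1.

Definition lp_feasible (x : R) (sigma : nat -> nat -> R) (theta : R) : Prop :=
  [/\ (forall i j, (1 <= i <= I)%N -> (1 <= j <= J i)%N -> 0 <= sigma i j),
      (forall j, (1 <= j <= J 1)%N -> W 1 1 j * x + B 1 j <= sigma 1%N j),
      (forall i j, (2 <= i <= I)%N -> (1 <= j <= J i)%N ->
         \sum_(1 <= hj < (J i.-1).+1) W hj i j * sigma i.-1 hj + B i j <= sigma i j)
    & theta = \sum_(1 <= hj < (J I).+1) W hj I.+1 1 * sigma I hj + B I.+1 1].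

End Net.

From mathcomp Require Import all_boot all_order all_algebra.
Import Order.TTheory GRing.Theory Num.Theory.
Local Open Scope ring_scope.

(* Feasibility propagates lower bounds layer by layer: if sigma_{i-1} dominates
   a_{i-1}, then nonnegative weights make the i-th constraint dominate the
   pre-activation of a_{i,j}, and sigma_{i,j} >= 0, so sigma_{i,j} dominates
   its ReLU.  The activations themselves satisfy every constraint, and the
   objective is monotone in sigma_I, so they attain the minimum N(x). *)

Lemma relu_ge0 (R : realFieldType) (t : R) : 0 <= relu t.
Proof. by rewrite /relu le_max lexx. Qed.

Lemma le_relu (R : realFieldType) (t : R) : t <= relu t.
Proof. by rewrite /relu le_max lexx orbT. Qed.

Lemma relu_le (R : realFieldType) (t s : R) : 0 <= s -> t <= s -> relu t <= s.
Proof. by move=> s_ge0 le_ts; rewrite /relu ge_max s_ge0 le_ts. Qed.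

Lemma ler_wsum_nat (R : realFieldType) (m n : nat) (w a b : nat -> R) :
  (forall k, (m <= k < n)%N -> 0 <= w k) ->
  (forall k, (m <= k < n)%N -> a k <= b k) ->
  \sum_(m <= k < n) w k * a k <= \sum_(m <= k < n) w k * b k.
Proof.
by move=> w_ge0 le_ab; apply: ler_sum_nat => k kmn; rewrite ler_wpM2l ?w_ge0 ?le_ab.
Qed.

Lemma Jw_hidden (I : nat) (J : nat -> nat) (i : nat) :
  (1 <= i <= I)%N -> Jw I J i = J i.
Proof.
case/andP=> i_gt0 le_iI; rewrite /Jw ifN -?lt0n //.
by rewrite ifN // neq_ltn ltnS le_iI.
Qed.

Lemma Jw_output (I : nat) (J : nat -> nat) : Jw I J I.+1 = 1%N.
Proof. by rewrite /Jw eqxx. Qed.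

Section ReluLP.
Variables (R : realFieldType) (I : nat) (J : nat -> nat).
Variables (W : nat -> nat -> nat -> R) (B : nat -> nat -> R) (x : R).

Hypothesis W_hidden_ge0 : forall hj i j, (2 <= i <= I)%N -> (1 <= j <= J i)%N ->
  (1 <= hj <= J i.-1)%N -> 0 <= W hj i j.
Hypothesis W_output_ge0 : forall hj, (1 <= hj <= J I)%N -> 0 <= W hj I.+1 1.

Lemma act_ge0 i j : 0 <= act J W B i x j.
Proof. by case: i => [|[|i]] //=; apply: relu_ge0. Qed.

Lemma act1 j : act J W B 1 x j = relu (W 1 1 j * x + B 1 j).
Proof. by []. Qed.

Lemma actSS i j : act J W B i.+2 x j =
  relu (\sum_(1 <= hj < (J i.+1).+1) W hj i.+2 j * act J W B i.+1 x hj + B i.+2 j).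
Proof. by []. Qed.

Lemma act_lp_feasible : lp_feasible I J W B x (act J W B ^~ x) (net I J W B x).
Proof.
split=> // [i j _ _|j _|[|[|i]] j //= _ _]; by [apply: act_ge0 | apply: le_relu].
Qed.

Lemma act_le_lp_feasible {sigma theta} : lp_feasible I J W B x sigma theta ->
  forall i j, (1 <= i <= I)%N -> (1 <= j <= J i)%N -> act J W B i x j <= sigma i j.
Proof.
case=> sigma_ge0 sigma1_ge sigma_ge _.
elim=> [//|[|i] IHi] j iI jJ.
  by rewrite act1 relu_le ?sigma_ge0 ?sigma1_ge.
have le_iI : (i.+2 <= I)%N by case/andP: iI.
rewrite actSS relu_le ?sigma_ge0 //.
apply: le_trans (sigma_ge i.+2 j _ jJ); last by rewrite le_iI.
rewrite lerD2r; apply: ler_wsum_nat => hj /andP[hj_gt0 hjJ].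
  by apply: W_hidden_ge0 => //; rewrite hj_gt0 -ltnS.
by apply: IHi; [rewrite /= ltnW | rewrite hj_gt0 -ltnS].
Qed.

Lemma net_le_lp_feasible {sigma theta} :
  (1 <= I)%N -> lp_feasible I J W B x sigma theta -> net I J W B x <= theta.
Proof.
move=> I_gt0 feas; have act_le := act_le_lp_feasible feas.
case: feas => _ _ _ ->; rewrite lerD2r; apply: ler_wsum_nat => hj /andP[hj_gt0 hjJ].
  by apply: W_output_ge0; rewrite hj_gt0 -ltnS.
by apply: act_le; rewrite ?I_gt0 ?leqnn // hj_gt0 -ltnS.
Qed.

End ReluLP.

Theorem mainTheorem1 (R : realFieldType) (I : nat) (J : nat -> nat)
    (W : nat -> nat -> nat -> R) (B : nat -> nat -> R) (x : R) :
  (1 <= I)%N ->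
  (forall i, (1 <= i <= I)%N -> (0 < J i)%N) ->
  (forall hj i j, (1 <= i <= I.+1)%N -> (1 <= j <= Jw I J i)%N ->
     (1 <= hj <= Jw I J i.-1)%N -> 0 <= W hj i j) ->
  [/\ exists sigma theta, lp_feasible I J W B x sigma theta,
      (forall sigma theta, lp_feasible I J W B x sigma theta -> net I J W B x <= theta),
      lp_feasible I J W B x (fun i j => act J W B i x j) (net I J W B x)
    & (forall sigma theta, lp_feasible I J W B x sigma theta ->
         forall i j, (1 <= i <= I)%N -> (1 <= j <= J i)%N ->
           act J W B i x j <= sigma i j)].
Proof.
move=> I_gt0 _ W_ge0.
have W_hidden_ge0 hj i j : (2 <= i <= I)%N -> (1 <= j <= J i)%N ->
    (1 <= hj <= J i.-1)%N -> 0 <= W hj i j.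
  case: i => [|i] // /andP[i_gt1 iI] jJ hjJ.
  apply: W_ge0; first by rewrite /= ltnW.
    by rewrite Jw_hidden // ltnW.
  by rewrite Jw_hidden //= (ltnW iI) andbT.
have W_output_ge0 hj : (1 <= hj <= J I)%N -> 0 <= W hj I.+1 1.
  move=> hjJ; apply: W_ge0; first by rewrite /= leqnn.
    by rewrite Jw_output.
  by rewrite Jw_hidden //= I_gt0 leqnn.
split.
- by exists (act J W B ^~ x), (net I J W B x); apply: act_lp_feasible.
- by move=> sigma theta; apply: net_le_lp_feasible.
- exact: act_lp_feasible.
- exact: act_le_lp_feasible.
Qed.
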